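(* Let $\mathcal{H}$ be a real Hilbert space of dimension $d$, $G>0$, $\mathcal{G}=\{g\in\mathcal{H}:\|g\|\le G\}$, $\theta\in\mathcal{H}$ fixed, and $h:\mathbb{R}\to\mathbb{R}$ an even convex function that is increasing on $[0,\infty)$. Consider the one-round game \[ H=\min_{w\in\mathcal{H}}\max_{g\in\mathcal{G}}\ \langle w,g\rangle+h(\|\theta-g\|). \] If $d>1$, $h$ is twice differentiable, and $h''(x)\le h'(x)/x$ for all $x>0$, then \[ H=h\Big(\sqrt{\|\theta\|^2+G^2}\Big)\qquad\text{and}\qquad w^*=\frac{\theta}{\sqrt{\|\theta\|^2+G^2}}\,h'\Big(\sqrt{\|\theta\|^2+G^2}\Big), \] and any $g^*\in\mathcal{H}$ with $\langle\theta,g^*\rangle=0$ and $\|g^*\|=G$ is a minimax play for the adversary.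
   Context: Write $H(w,g)=\langle w,g\rangle+h(\|\theta-g\|)$. $w^*=\arg\min_w\max_{g\in\mathcal{G}}H(w,g)$ is the minimax play of the player, and a minimax play of the adversary is a $g^*\in\arg\max_{g\in\mathcal{G}}H(w^*,g)$. *)

From HB Require Import structures.
From mathcomp Require Import all_boot all_order all_algebra.
From mathcomp Require Import all_classical all_reals all_analysis.
Set Implicit Arguments. Unset Strict Implicit. Unset Printing Implicit Defensive.
Import Order.TTheory GRing.Theory Num.Theory.
Local Open Scope ring_scope.

(* The d-dimensional real Hilbert space is modelled (up to isometric
   isomorphism) as row vectors 'rV[R]_d with the Euclidean inner product. *)
Definition inner {R : realType} {d : nat} (u v : 'rV[R]_d) : R :=
  \sum_(i < d) u 0 i * v 0 i.

Definition hnorm {R : realType} {d : nat} (u : 'rV[R]_d) : R :=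
  Num.sqrt (inner u u).

Definition adv_set {R : realType} {d : nat} (Gr : R) : set 'rV[R]_d :=
  [set g | hnorm g <= Gr].

Definition payoff {R : realType} {d : nat} (h : R -> R) (theta w g : 'rV[R]_d)
  : R := inner w g + h (hnorm (theta - g)).

Definition even_fun {R : realType} (h : R -> R) : Prop :=
  forall x, h (- x) = h x.

Definition convex_fun {R : realType} (h : R -> R) : Prop :=
  forall x y t : R, 0 <= t -> t <= 1 ->
    h (t * x + (1 - t) * y) <= t * h x + (1 - t) * h y.

(* "increasing on [0, oo)" read as non-decreasing there. *)
Definition incr_nonneg {R : realType} (h : R -> R) : Prop :=
  forall x y : R, 0 <= x -> x <= y -> h x <= h y.

Definition twice_differentiable {R : realType} (h : R -> R) : Prop :=
  forall x : R, derivable h x 1 /\ derivable (derive1 h) x 1.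

(* V is the value min_w max_{g in G} H(w,g), with both min and max attained:
   every w has a maximising g and  max_g H(w,g) >= V, and some w achieves V. *)
Definition is_minimax_value {R : realType} {d : nat} (h : R -> R)
  (theta : 'rV[R]_d) (Gr : R) (V : R) : Prop :=
  (forall w : 'rV[R]_d, exists2 g, adv_set Gr g &
      (forall g', adv_set Gr g' -> payoff h theta w g' <= payoff h theta w g)
      /\ V <= payoff h theta w g) /\
  (exists w : 'rV[R]_d, forall g, adv_set Gr g -> payoff h theta w g <= V).

Definition is_minimax_player {R : realType} {d : nat} (h : R -> R)
  (theta : 'rV[R]_d) (Gr : R) (V : R) (w : 'rV[R]_d) : Prop :=
  is_minimax_value h theta Gr V /\
  (forall g, adv_set Gr g -> payoff h theta w g <= V).

Definition is_minimax_adv {R : realType} {d : nat} (h : R -> R)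
  (theta : 'rV[R]_d) (Gr : R) (w g : 'rV[R]_d) : Prop :=
  adv_set Gr g /\
  (forall g', adv_set Gr g' -> payoff h theta w g' <= payoff h theta w g).

(* Let r = sqrt(|theta|^2 + G^2) and K = h'(r)/r.  The bound h'' <= h'/x makes
   h'(x)/x nonincreasing on (0, oo), so s |-> h(s) - K s^2/2 is maximal at s = r.
   For g in the ball and s = |theta - g| we have s^2 <= r^2 - 2<theta, g>, hence
   <K theta, g> + h(s) <= h(s) + K (r^2 - s^2)/2 <= h(r): the play K theta
   guarantees h(r).  Conversely, as d > 1, every w is answered by some g of norm G
   orthogonal to theta with <w, g> >= 0; then |theta - g| = r and the payoff is
   at least h(r).  Maximisers over the ball exist by compactness. *)

From HB Require Import structures.
From mathcomp Require Import all_boot all_order all_algebra.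
From mathcomp Require Import all_classical all_reals all_analysis.
From mathcomp Require Import lra ring.
Import Order.TTheory GRing.Theory Num.Theory.
Import numFieldNormedType.Exports.
Local Open Scope classical_set_scope.
Local Open Scope ring_scope.

Lemma nondecreasing_derive1_ge0 {R : realType} (f : R -> R) (x : R) :
  incr_nonneg f -> derivable f x 1 -> 0 < x -> 0 <= derive1 f x.
Proof.
move=> f_ndecr fx x_gt0; rewrite derive1E /derive.
apply: limr_ge => //; near=> t.
have t_neq0 : t != 0 by near: t; exact: (nbhs_dnbhs_neq (0 : R^o)).
have t_small : `|t| < x by near: t; exact: dnbhs0_lt.
change (0 <= t^-1 * (f (t * 1 + x) - f x)); rewrite mulr1.
move: t_neq0; rewrite neq_lt => /orP[t_lt0|t_gt0].
- rewrite nmulr_rge0 ?invr_lt0// subr_le0 f_ndecr//; last by lra.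
  by move: t_small; rewrite ltr0_norm//; lra.
- by rewrite pmulr_rge0 ?invr_gt0// subr_ge0 f_ndecr//; lra.
Unshelve. all: by end_near. Qed.

Section CurvatureCondition.
Context {R : realType} {h : R -> R}.
Hypothesis h_twice : twice_differentiable h.
Hypothesis h_curv :
  forall x : R, 0 < x -> derive1 (derive1 h) x <= derive1 h x / x.

Let is_derive_h (x : R) : is_derive x (1 : R) h (derive1 h x).
Proof. by rewrite derive1E; apply: derivableP; case: (h_twice x). Qed.

Let is_derive_h' (x : R) :
  is_derive x (1 : R) (derive1 h) (derive1 (derive1 h) x).
Proof. by rewrite derive1E; apply: derivableP; case: (h_twice x). Qed.

Lemma derive1_div_nonincr (a b : R) : 0 < a -> a <= b ->
  derive1 h b / b <= derive1 h a / a.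
Proof.
move=> a_gt0 ab.
pose q := derive1 h * (fun y : R => (id y)^-1).
have q_der (x : R) : 0 < x ->
    is_derive x (1 : R) q ((derive1 (derive1 h) x - derive1 h x / x) / x).
  move=> x_gt0; apply: is_derive_eq.
    apply: is_deriveM; first exact: is_derive_h'.
    by apply: is_deriveV; rewrite gt_eqF.
  by rewrite /GRing.scale/= expr2 invfM; field; rewrite gt_eqF.
have pos (x : R) : x \in `[a, b] -> 0 < x by move=> /andP[/(lt_le_trans a_gt0)].
apply: (@ler0_derive1_le_cc _ q a b) => //.
- by move=> x /subset_itv_oo_cc/pos/q_der[].
- move=> x /subset_itv_oo_cc/pos x_gt0; have := q_der x x_gt0 => q_der_x.
  by rewrite derive1E derive_val pmulr_lle0 ?invr_gt0// subr_le0 h_curv.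
- apply: derivable_within_continuous => x /pos/q_der[]//.
all: by rewrite in_itv/= ab lexx.
Qed.

Lemma sub_quadratic_max (r s : R) : 0 < r -> 0 <= s ->
  h s - derive1 h r / r / 2 * s ^+ 2 <= h r - derive1 h r / r / 2 * r ^+ 2.
Proof.
move=> r_gt0 s_ge0; set K := derive1 h r / r.
pose f := h - (K / 2) \*: (@id R ^+ 2).
have f_der (x : R) : is_derive x (1 : R) f (derive1 h x - K * x).
  apply: is_derive_eq.
    exact: is_deriveB (is_derive_h x)
      (is_deriveZ (K / 2) (is_deriveX 2 (is_derive_id x (1 : R)))).
  by rewrite /GRing.scale/= expr1 mulr1; field.
have f_cont (a b : R) : {within `[a, b], continuous f}.
  by apply: derivable_within_continuous => x _; case: (f_der x).
have f'E (x : R) : 0 < x -> derive1 f x = x * (derive1 h x / x - K).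
  move=> x_gt0; have := f_der x => f_der_x.
  rewrite derive1E derive_val mulrBr mulrCA divff ?gt_eqF// mulr1.
  by rewrite [x * K]mulrC.
have [sr|rs] := leP s r.
- apply: (@ger0_derive1_le_cc _ f s r) => //.
  all: rewrite ?in_itv/= ?lexx ?sr//.
  move=> x /andP[s_lt_x x_lt_r]; have x_gt0 := le_lt_trans s_ge0 s_lt_x.
  by rewrite f'E// mulr_ge0 ?subr_ge0 ?derive1_div_nonincr ?ltW.
- apply: (@ler0_derive1_le_cc _ f r s) => //.
  all: rewrite ?in_itv/= ?lexx ?(ltW rs)//.
  move=> x /andP[r_lt_x x_lt_s]; have x_gt0 := lt_trans r_gt0 r_lt_x.
  by rewrite f'E// mulr_ge0_le0 ?subr_le0 ?derive1_div_nonincr ?ltW.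
Qed.
End CurvatureCondition.

Section EuclideanRows.
Context {R : realType} {d : nat}.
Implicit Types (u v w : 'rV[R]_d) (k : R).

Lemma innerC u v : inner u v = inner v u.
Proof. by apply: eq_bigr => i _; rewrite mulrC. Qed.

Lemma innerZl k u v : inner (k *: u) v = k * inner u v.
Proof.
by rewrite /inner mulr_sumr; apply: eq_bigr => i _; rewrite mxE mulrA.
Qed.

Lemma innerZr k u v : inner u (k *: v) = k * inner u v.
Proof. by rewrite innerC innerZl innerC. Qed.

Lemma innerBr u v w : inner u (v - w) = inner u v - inner u w.
Proof.
by rewrite /inner -sumrB; apply: eq_bigr => i _; rewrite !mxE mulrBr.
Qed.

Lemma inner_deltar u i : inner u (delta_mx 0 i) = u 0 i.
Proof.
rewrite /inner (bigD1 i)//= big1 => [|j /negbTE ji]; rewrite mxE ?ji ?eqxx//.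
  by rewrite mulr1 addr0.
by rewrite mulr0.
Qed.

Lemma inner_ge0 u : 0 <= inner u u.
Proof. by apply: sumr_ge0 => i _; rewrite -expr2 sqr_ge0. Qed.

Lemma hnorm_ge0 u : 0 <= hnorm u.
Proof. exact: sqrtr_ge0. Qed.

Lemma hnorm0 : hnorm (0 : 'rV[R]_d) = 0.
Proof. by rewrite /hnorm /inner big1 ?sqrtr0// => i _; rewrite mxE mul0r. Qed.

Lemma hnorm_sqr u : hnorm u ^+ 2 = inner u u.
Proof. by rewrite sqr_sqrtr // inner_ge0. Qed.

Lemma hnorm_sqrB u v :
  hnorm (u - v) ^+ 2 = hnorm u ^+ 2 - 2 * inner u v + hnorm v ^+ 2.
Proof.
rewrite !hnorm_sqr /inner mulr_sumr -sumrB -big_split /=.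
by apply: eq_bigr => i _; rewrite !mxE; ring.
Qed.

Lemma hnormZ k u : hnorm (k *: u) = `|k| * hnorm u.
Proof.
by rewrite /hnorm innerZl innerZr mulrA -expr2 sqrtrM ?sqr_ge0// sqrtr_sqr.
Qed.

Lemma coord_le_hnorm u i : `|u 0 i| <= hnorm u.
Proof.
rewrite -sqrtr_sqr ler_sqrt ?inner_ge0// /inner (bigD1 i)//= -expr2 lerDl.
by apply: sumr_ge0 => j _; rewrite -expr2 sqr_ge0.
Qed.

Lemma hnorm_gt0 u : (0 < hnorm u) = (u != 0).
Proof.
rewrite lt_def hnorm_ge0 andbT; apply/idP/idP; apply: contra_neq.
  by move=> ->; rewrite hnorm0.
move=> u0; apply/matrixP => i j; rewrite !mxE (ord1 i).
by apply/eqP; rewrite -normr_le0 -u0 coord_le_hnorm.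
Qed.

Lemma continuous_inner {T : topologicalType} (f g : T -> 'rV[R]_d) :
  continuous f -> continuous g -> continuous (fun x => inner (f x) (g x)).
Proof.
move=> f_cont g_cont; apply: (@continuous_big _ _ +%R 0 predT add_continuous).
move=> i _ x; apply: (@continuousM _ _ (fun y => f y 0 i) (fun y => g y 0 i)).
  exact: (continuous_comp (f_cont x) (@coord_continuous R 1 d 0 i (f x))).
exact: (continuous_comp (g_cont x) (@coord_continuous R 1 d 0 i (g x))).
Qed.

Lemma hnorm_continuous : continuous (@hnorm R d).
Proof.
move=> u; apply: continuous_comp; last exact: sqrt_continuous.
by apply: (@continuous_inner _ id id) => v; exact: cvg_id.
Qed.

Lemma adv_set_compact (G : R) : compact (adv_set G : set 'rV[R]_d).
Proof.
apply: (@subclosed_compact _ _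
  [set v : 'rV[R]_d | forall i, v ord0 i \in `[- G, G]]).
- rewrite (_ : adv_set G = hnorm @^-1` [set x | x <= G])//.
  apply: preimage_closed; last exact: closed_le.
  by move=> u _; exact: hnorm_continuous.
- apply: (@rV_compact _ _ (fun=> `[- G, G]%classic)) => i.
  exact: segment_compact.
- move=> u uG i; rewrite in_itv/= -ler_norml.
  exact: le_trans (coord_le_hnorm u i) uG.
Qed.
End EuclideanRows.

Lemma exists_orthogonal {R : realType} {d : nat} (theta : 'rV[R]_d) :
  (1 < d)%N -> exists2 v : 'rV[R]_d, inner theta v = 0 & v != 0.
Proof.
case: d theta => [|[|n]] theta // _.
pose e (i : 'I_n.+2) : 'rV[R]_n.+2 := delta_mx 0 i.
have e_neq0 i : e i != 0.
  by apply/eqP => /matrixP/(_ 0 i)/eqP; rewrite !mxE !eqxx oner_eq0.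
pose v := theta 0 1 *: e 0 - theta 0 0 *: e 1.
have [v0|vn0] := eqVneq v 0; last first.
  exists v => //.
  by rewrite innerBr !innerZr !inner_deltar mulrC subrr.
exists (e 0) => //.
have /eqP := congr1 (fun M : 'rV_n.+2 => M 0 1) v0.
by rewrite !mxE /= mulr0 mulr1 sub0r oppr_eq0 inner_deltar => /eqP.
Qed.

Lemma exists_orthogonal_sphere {R : realType} {d : nat}
    (theta w : 'rV[R]_d) (G : R) :
  (1 < d)%N -> 0 <= G ->
  exists g, [/\ inner theta g = 0, hnorm g = G & 0 <= inner w g].
Proof.
move=> d_gt1 G_ge0; have [v theta_v v_neq0] := exists_orthogonal theta d_gt1.
have v_gt0 : 0 < hnorm v by rewrite hnorm_gt0.
pose k := (if 0 <= inner w v then 1 else -1) * (G / hnorm v).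
exists (k *: v); split.
- by rewrite innerZr theta_v mulr0.
- rewrite hnormZ normrM [`|G / _|]ger0_norm ?divr_ge0 ?hnorm_ge0//.
  rewrite -mulrA divfK ?gt_eqF//.
  by case: ifP => _; rewrite ?normrN normr1 mul1r.
- rewrite innerZr /k mulrAC mulr_ge0 ?divr_ge0 ?hnorm_ge0//.
  case: ifP => [|/negbT]; rewrite ?mul1r// mulN1r oppr_ge0 -ltNge.
  exact: ltW.
Qed.

Lemma hnorm_sub_orthogonal {R : realType} {d : nat} (u v : 'rV[R]_d) :
  inner u v = 0 -> hnorm (u - v) = Num.sqrt (hnorm u ^+ 2 + hnorm v ^+ 2).
Proof.
move=> uv; rewrite -[LHS]ger0_norm ?hnorm_ge0// -sqrtr_sqr.
by rewrite hnorm_sqrB uv mulr0 subr0.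
Qed.

Section OneRoundGame.
Context {R : realType} {d : nat} (h : R -> R) (theta : 'rV[R]_d) (Gr : R).

Lemma exists_payoff_argmax (w : 'rV[R]_d) : continuous h -> 0 <= Gr ->
  exists2 g, adv_set Gr g &
    forall g', adv_set Gr g' -> payoff h theta w g' <= payoff h theta w g.
Proof.
move=> h_cont Gr_ge0.
have payoff_cont : continuous (payoff h theta w).
  move=> g; apply: continuousD.
    apply: (@continuous_inner _ _ _ (fun=> w) id) => x.
      exact: cst_continuous.
    exact: cvg_id.
  apply: continuous_comp; last exact: h_cont.
  apply: continuous_comp; last exact: hnorm_continuous.
  by apply: continuousB; [exact: cst_continuous | exact: cvg_id].
have adv_set0 : adv_set Gr (0 : 'rV[R]_d) by rewrite /adv_set/= hnorm0.
have [g gG g_max] := EVT_max_rV (ex_intro _ _ adv_set0) (adv_set_compact Gr)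
  (continuous_subspaceT payoff_cont).
by exists g; [rewrite -inE | move=> g' g'G; apply: g_max; rewrite inE].
Qed.

Lemma payoff_radial_play_le (r : R) : twice_differentiable h -> incr_nonneg h ->
  (forall x : R, 0 < x -> derive1 (derive1 h) x <= derive1 h x / x) ->
  0 < r -> hnorm theta ^+ 2 + Gr ^+ 2 <= r ^+ 2 ->
  forall g, adv_set Gr g ->
    payoff h theta ((derive1 h r / r) *: theta) g <= h r.
Proof.
move=> h_twice h_ndecr h_curv r_gt0 r_large g gG; set K := derive1 h r / r.
have K_ge0 : 0 <= K.
  apply: divr_ge0; last exact: ltW.
  by apply: nondecreasing_derive1_ge0 => //; case: (h_twice r).
set s := hnorm (theta - g).
have s2 : s ^+ 2 <= r ^+ 2 - 2 * inner theta g.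
  rewrite hnorm_sqrB; have : hnorm g ^+ 2 <= Gr ^+ 2.
    by rewrite ler_sqr ?nnegrE ?hnorm_ge0// (le_trans (hnorm_ge0 g)).
  by move: r_large; lra.
have := sub_quadratic_max h_twice h_curv r s r_gt0 (hnorm_ge0 _).
rewrite /payoff innerZl -/K -/s => profile_le.
have : K * inner theta g <= K * ((r ^+ 2 - s ^+ 2) / 2).
  by rewrite ler_wpM2l//; lra.
by lra.
Qed.
End OneRoundGame.

Theorem lemma5 (R : realType) (d : nat) (Gr : R) (theta : 'rV[R]_d)
  (h : R -> R) :
  (1 < d)%N -> 0 < Gr ->
  even_fun h -> convex_fun h -> incr_nonneg h ->
  twice_differentiable h ->
  (forall x : R, 0 < x -> derive1 (derive1 h) x <= derive1 h x / x) ->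
  let r := Num.sqrt (hnorm theta ^+ 2 + Gr ^+ 2) in
  let wstar := (derive1 h r / r) *: theta in
  is_minimax_value h theta Gr (h r) /\
  is_minimax_player h theta Gr (h r) wstar /\
  (forall gstar : 'rV[R]_d, inner theta gstar = 0 -> hnorm gstar = Gr ->
     is_minimax_adv h theta Gr wstar gstar).
Proof.
move=> d_gt1 Gr_gt0 _ _ h_ndecr h_twice h_curv r wstar.
have r2 : r ^+ 2 = hnorm theta ^+ 2 + Gr ^+ 2.
  by rewrite sqr_sqrtr ?addr_ge0 ?sqr_ge0.
have r_gt0 : 0 < r by rewrite sqrtr_gt0 ltr_wpDl ?sqr_ge0 ?exprn_gt0.
have h_cont : continuous h.
  move=> x; apply: differentiable_continuous; apply/derivable1_diffP.
  by case: (h_twice x).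
have payoff_orth w g : inner theta g = 0 -> hnorm g = Gr ->
    payoff h theta w g = inner w g + h r.
  by move=> theta_g g_Gr; rewrite /payoff hnorm_sub_orthogonal// g_Gr.
have player_bound : forall g, adv_set Gr g -> payoff h theta wstar g <= h r.
  by apply: payoff_radial_play_le; rewrite // r2.
have value : is_minimax_value h theta Gr (h r).
  split=> [w|]; last by exists wstar.
  have [g gG g_max] := exists_payoff_argmax h theta Gr w h_cont (ltW Gr_gt0).
  exists g => //; split => //.
  have [g0 [theta_g0 g0_Gr w_g0]] :=
    exists_orthogonal_sphere theta w Gr d_gt1 (ltW Gr_gt0).
  apply: le_trans (g_max g0 _); last by rewrite /adv_set/= g0_Gr.
  by rewrite payoff_orth// lerDr.
do 2!split => //.
move=> g theta_g g_Gr; split=> [|g' g'G]; first by rewrite /adv_set/= g_Gr.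
by rewrite (payoff_orth wstar g)// innerZl theta_g mulr0 add0r player_bound.
Qed.
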